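(* Let $(A,[\cdot,\cdot]_1,\circ_1)$ be a Malcev-Poisson algebra and let $(A^*,[\cdot,\cdot]_2,\circ_2)$ be a Malcev-Poisson algebra structure on the dual space $A^*$. Then $(A\oplus A^*,A,A^* )$ is a standard Manin triple of Malcev-Poisson algebras if and only if $(A,A^*,\mathrm{ad}_A^*,-L^*,\mathrm{ad}_{A^*}^*,-\mathcal{L}_{A^*}^* )$ is a matched pair of Malcev-Poisson algebras.
   Context: All vector spaces are finite-dimensional over an algebraically closed field $\mathbb{K}$ of characteristic $0$. A Malcev algebra is a vector space with an antisymmetric bilinear bracket satisfying $J(x,y,[x,z])=[J(x,y,z),x]$, where $J(x,y,z)=[[x,y],z]+[[z,x],y]+[[y,z],x]$. A Malcev-Poisson algebra $(A,[\cdot,\cdot],\circ)$: a Malcev bracket and a commutative associative product $\circ$ with $[x,y\circ z]=[x,y]\circ z+y\circ[x,z]$. Representations: of a Malcev algebra, a linear $\varrho:A\to\mathrm{End}(V)$ with $\varrho([[x,y],z])=\varrho(z)\varrho(y)\varrho(x)-\varrho(y)\varrho(x)\varrho(z)+\varrho(x)\varrho([y,z])+\varrho([x,z])\varrho(y)$; of a commutative associative algebra, $\mu$ with $\mu(x\circ y)=\mu(x)\mu(y)$; of a Malcev-Poisson algebra, a pair $(\varrho,\mu)$ of these with $\varrho(x\circ y)=\mu(y)\varrho(x)+\mu(x)\varrho(y)$ and $\mu([x,y])=\varrho(x)\mu(y)-\mu(y)\varrho(x)$. Notation: for $\theta:A\to\mathrm{End}(V)$, $\theta^*:A\to\mathrm{End}(V^*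 )$ is $\langle\theta^*(x)\xi,v\rangle=-\langle\xi,\theta(x)v\rangle$. $\mathrm{ad}(x)y=[x,y]_1$, $L(x)y=x\circ_1y$ on $A$; $\mathrm{ad}_A^*=\mathrm{ad}^*$, $L^*$ are their duals (maps $A\to\mathrm{End}(A^* )$); similarly $\mathrm{ad}_{A^*}^*$, $\mathcal{L}_{A^*}^*:A^*\to\mathrm{End}(A)$ are the duals of $\xi\mapsto[\xi,\cdot]_2$, $\xi\mapsto\xi\circ_2\cdot$ (with $A^{**}=A$), i.e. $\langle \mathrm{ad}_{A^*}^*(\xi)x,\eta\rangle=-\langle x,[\xi,\eta]_2\rangle$, $\langle\mathcal{L}_{A^*}^*(\xi)x,\eta\rangle=-\langle x,\xi\circ_2\eta\rangle$. Matched pair of Malcev-Poisson algebras $(A_1,A_2,\varrho_1,\mu_1,\varrho_2,\mu_2)$ ($\varrho_1,\mu_1:A_1\to\mathrm{End}(A_2)$, $\varrho_2,\mu_2:A_2\to\mathrm{End}(A_1)$): (i) $\mu_1,\mu_2$ are associative representations with $\mu_1(x_1)(x_2\circ_2y_2)=(\mu_1(x_1)x_2)\circ_2y_2+\mu_1(\mu_2(x_2)x_1)y_2$ and $\mu_2(x_2)(x_1\circ_1y_1)=(\mu_2(x_2)x_1)\circ_1y_1+\mu_2(\mu_1(x_1)x_2)y_1$; (ii) $\varrho_1,\varrho_2$ are Malcev representations such that the bracket $[x_1+x_2,y_1+y_2]=[x_1,y_1]_1+\varrho_2(x_2)y_1-\varrho_2(y_2)x_1+[x_2,y_2]_2+\varrho_1(x_1)y_2-\varrho_1(y_1)x_2$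 on $A_1\oplus A_2$ is a Malcev bracket (matched pair of Malcev algebras); (iii) $(A_2,\varrho_1,\mu_1)$, $(A_1,\varrho_2,\mu_2)$ are Malcev-Poisson representations; (iv) for all $x_i,y_i\in A_i$: $\varrho_2(x_2)(x_1\circ_1y_1)=(\varrho_2(x_2)x_1)\circ_1y_1+x_1\circ_1(\varrho_2(x_2)y_1)-\mu_2(\varrho_1(x_1)x_2)y_1-\mu_2(\varrho_1(y_1)x_2)x_1$; $\varrho_1(x_1)(x_2\circ_2y_2)=(\varrho_1(x_1)x_2)\circ_2y_2+x_2\circ_2(\varrho_1(x_1)y_2)-\mu_1(\varrho_2(x_2)x_1)y_2-\mu_1(\varrho_2(y_2)x_1)x_2$; $[x_1,\mu_2(x_2)y_1]_1-\varrho_2(\mu_1(y_1)x_2)x_1=\mu_2(\varrho_1(x_1)x_2)y_1-(\varrho_2(x_2)x_1)\circ_1y_1+\mu_2(x_2)[x_1,y_1]_1$; $[x_2,\mu_1(x_1)y_2]_2-\varrho_1(\mu_2(y_2)x_1)x_2=\mu_1(\varrho_2(x_2)x_1)y_2-(\varrho_1(x_1)x_2)\circ_2y_2+\mu_1(x_1)[x_2,y_2]_2$. A standard Manin triple of Malcev-Poisson algebras $(A\oplus A^*,A,A^* )$ means: a Malcev-Poisson algebra structure on $A\oplus A^*$ for which $(A,[\cdot,\cdot]_1,\circ_1)$ and $(A^*,[\cdot,\cdot]_2,\circ_2)$ are Malcev-Poisson subalgebras and the bilinear form $\omega_d(x+\xi,y+\eta)=\langle x,\eta\rangle+\langle\xi,y\rangle$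 is invariant: $\omega_d(u\circ v,w)=\omega_d(u,v\circ w)$ and $\omega_d([u,v],w)=\omega_d(u,[v,w])$ for all $u,v,w\in A\oplus A^*$. *)

From HB Require Import structures.
From mathcomp Require Import all_boot all_order all_algebra.
Set Implicit Arguments. Unset Strict Implicit. Unset Printing Implicit Defensive.
Import GRing.Theory.
Local Open Scope ring_scope.

Section Defs.
Variable K : fieldType.

Definition linear_fun (V W : lmodType K) (f : V -> W) :=
  forall (a : K) x y, f (a *: x + y) = a *: f x + f y.

Definition bilin (U V W : lmodType K) (b : U -> V -> W) :=
  (forall y, linear_fun (fun x => b x y)) /\ (forall x, linear_fun (b x)).

Definition jacobiator (V : lmodType K) (br : V -> V -> V) (x y z : V) :=
  br (br x y) z + br (br z x) y + br (br y z) x.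

Definition malcev (V : lmodType K) (br : V -> V -> V) :=
  bilin br /\ (forall x y, br x y = - br y x) /\
  (forall x y z, jacobiator br x y (br x z) = br (jacobiator br x y z) x).

Definition malcev_poisson (V : lmodType K) (br pr : V -> V -> V) :=
  malcev br /\ bilin pr /\ (forall x y, pr x y = pr y x) /\
  (forall x y z, pr (pr x y) z = pr x (pr y z)) /\
  (forall x y z, br x (pr y z) = pr (br x y) z + pr y (br x z)).

Definition malcev_rep (A V : lmodType K) (brA : A -> A -> A) (r : A -> V -> V) :=
  bilin r /\
  (forall x y z v, r (brA (brA x y) z) v =
     r z (r y (r x v)) - r y (r x (r z v)) + r x (r (brA y z) v) + r (brA x z) (r y v)).

Definition assoc_rep (A V : lmodType K) (prA : A -> A -> A) (m : A -> V -> V) :=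
  bilin m /\ (forall x y v, m (prA x y) v = m x (m y v)).

Definition mp_rep (A V : lmodType K) (brA prA : A -> A -> A) (r m : A -> V -> V) :=
  malcev_rep brA r /\ assoc_rep prA m /\
  (forall x y v, r (prA x y) v = m y (r x v) + m x (r y v)) /\
  (forall x y v, m (brA x y) v = r x (m y v) - m y (r x v)).

Definition mp_bracket (A1 A2 : lmodType K) (br1 : A1 -> A1 -> A1) (br2 : A2 -> A2 -> A2)
  (r1 : A1 -> A2 -> A2) (r2 : A2 -> A1 -> A1) (u v : A1 * A2) : A1 * A2 :=
  (br1 u.1 v.1 + r2 u.2 v.1 - r2 v.2 u.1, br2 u.2 v.2 + r1 u.1 v.2 - r1 v.1 u.2).

Definition matched_pair (A1 A2 : lmodType K)
  (br1 pr1 : A1 -> A1 -> A1) (br2 pr2 : A2 -> A2 -> A2)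
  (r1 m1 : A1 -> A2 -> A2) (r2 m2 : A2 -> A1 -> A1) :=
  [/\ assoc_rep pr1 m1, assoc_rep pr2 m2,
      (forall x1 x2 y2, m1 x1 (pr2 x2 y2) = pr2 (m1 x1 x2) y2 + m1 (m2 x2 x1) y2) &
      (forall x2 x1 y1, m2 x2 (pr1 x1 y1) = pr1 (m2 x2 x1) y1 + m2 (m1 x1 x2) y1)] /\
  [/\ malcev_rep br1 r1, malcev_rep br2 r2 & malcev (mp_bracket br1 br2 r1 r2)] /\
  (mp_rep br1 pr1 r1 m1 /\ mp_rep br2 pr2 r2 m2) /\
  [/\ (forall x1 y1 x2, r2 x2 (pr1 x1 y1) =
          pr1 (r2 x2 x1) y1 + pr1 x1 (r2 x2 y1) - m2 (r1 x1 x2) y1 - m2 (r1 y1 x2) x1),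
      (forall x2 y2 x1, r1 x1 (pr2 x2 y2) =
          pr2 (r1 x1 x2) y2 + pr2 x2 (r1 x1 y2) - m1 (r2 x2 x1) y2 - m1 (r2 y2 x1) x2),
      (forall x1 y1 x2, br1 x1 (m2 x2 y1) - r2 (m1 y1 x2) x1 =
          m2 (r1 x1 x2) y1 - pr1 (r2 x2 x1) y1 + m2 x2 (br1 x1 y1)) &
      (forall x2 y2 x1, br2 x2 (m1 x1 y2) - r1 (m2 y2 x1) x2 =
          m1 (r2 x2 x1) y2 - pr2 (r1 x1 x2) y2 + m1 x1 (br2 x2 y2))].

(* A = K^n as row vectors, and A^* identified with K^n via the pairing *)
Definition pairing (n : nat) (x xi : 'rV[K]_n) : K := \sum_(i < n) x 0 i * xi 0 i.

(* dual action: <dualop th x xi, v> = - <xi, th x v>  (written in coordinates) *)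
Definition dualop (n : nat) (th : 'rV[K]_n -> 'rV[K]_n -> 'rV[K]_n)
  (x xi : 'rV[K]_n) : 'rV[K]_n :=
  \row_(j < n) - pairing xi (th x (delta_mx 0 j)).

Definition omega_d (n : nat) (u v : 'rV[K]_n * 'rV[K]_n) : K :=
  pairing u.1 v.2 + pairing u.2 v.1.

Definition std_manin_triple (n : nat) (br1 pr1 br2 pr2 : 'rV[K]_n -> 'rV[K]_n -> 'rV[K]_n) :=
  exists br pr : 'rV[K]_n * 'rV[K]_n -> 'rV[K]_n * 'rV[K]_n -> 'rV[K]_n * 'rV[K]_n,
  [/\ malcev_poisson br pr,
      (forall x y, br (x, 0) (y, 0) = (br1 x y, 0)) /\ (forall x y, pr (x, 0) (y, 0) = (pr1 x y, 0)),
      (forall xi eta, br (0, xi) (0, eta) = (0, br2 xi eta)) /\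
      (forall xi eta, pr (0, xi) (0, eta) = (0, pr2 xi eta)) &
      (forall u v w, omega_d (pr u v) w = omega_d u (pr v w)) /\
      (forall u v w, omega_d (br u v) w = omega_d u (br v w))].

End Defs.

(* Invariance of [omega_d] determines the mixed brackets and products of a
   Manin triple on A (+) A^*: they are those of the double of A and A^* along
   the coadjoint representations ad^* and -L^* of A and of A^*.  Conversely,
   [omega_d] is invariant on that double.  So the theorem reduces to the
   general fact that the double of two Malcev-Poisson algebras along
   Malcev-Poisson representations is a Malcev-Poisson algebra iff the data
   form a matched pair: associativity and the Leibniz rule of the double,
   evaluated on homogeneous elements, are the matched-pair conditions.  The
   representation axioms required of ad^* and -L^* hold in every
   Malcev-Poisson algebra; for the Malcev part this is the transpose of an
   identity for ad obtained from the linearized Malcev identity, which needs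
   2 <> 0. *)

From HB Require Import structures.
From mathcomp Require Import all_boot all_order all_algebra ring.
From Stdlib Require Import FunctionalExtensionality.
Set Implicit Arguments. Unset Strict Implicit. Unset Printing Implicit Defensive.
Import GRing.Theory.
Local Open Scope ring_scope.

Section LinearFun.
Variables (K : fieldType) (U W : lmodType K) (f : U -> W).
Hypothesis lin_f : linear_fun f.

Lemma linear_funD x y : f (x + y) = f x + f y.
Proof. by rewrite -[x]scale1r lin_f !scale1r. Qed.

Lemma linear_fun0 : f 0 = 0.
Proof. by apply: (addrI (f 0)); rewrite -linear_funD !addr0. Qed.

Lemma linear_funZ a x : f (a *: x) = a *: f x.
Proof. by rewrite -[a *: x]addr0 lin_f linear_fun0 addr0. Qed.

Lemma linear_funN x : f (- x) = - f x.
Proof. by rewrite -scaleN1r linear_funZ scaleN1r. Qed.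

Lemma linear_fun_sum (I : Type) (r : seq I) (P : pred I) (F : I -> U) :
  f (\sum_(i <- r | P i) F i) = \sum_(i <- r | P i) f (F i).
Proof. by elim/big_rec2: _ => [|i a b _ <-]; rewrite ?linear_fun0 ?linear_funD. Qed.

End LinearFun.

Section Bilinear.
Variables (K : fieldType) (U1 U2 W : lmodType K) (b : U1 -> U2 -> W).
Hypothesis bil_b : bilin b.

Lemma bilinDl x y z : b (x + y) z = b x z + b y z. Proof. exact: (linear_funD (bil_b.1 z)). Qed.
Lemma bilinDr x y z : b x (y + z) = b x y + b x z. Proof. exact: (linear_funD (bil_b.2 x)). Qed.
Lemma bilinNl x z : b (- x) z = - b x z. Proof. exact: (linear_funN (bil_b.1 z)). Qed.
Lemma bilinNr x z : b x (- z) = - b x z. Proof. exact: (linear_funN (bil_b.2 x)). Qed.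
Lemma bilin0l z : b 0 z = 0. Proof. exact: (linear_fun0 (bil_b.1 z)). Qed.
Lemma bilin0r x : b x 0 = 0. Proof. exact: (linear_fun0 (bil_b.2 x)). Qed.
Lemma bilinZl a x z : b (a *: x) z = a *: b x z. Proof. exact: (linear_funZ (bil_b.1 z)). Qed.
Lemma bilinZr a x z : b x (a *: z) = a *: b x z. Proof. exact: (linear_funZ (bil_b.2 x)). Qed.

Lemma bilin_opp : bilin (fun x z => - b x z).
Proof. by split=> [z|x] a x1 x2; rewrite ?bilinDl ?bilinDr ?bilinZl ?bilinZr opprD scalerN. Qed.

End Bilinear.

Lemma eq_lincomb (K : pzRingType) (V : lmodType K) (k : K) (a b c d : V) :
  a = b -> c - k *: a = d - k *: b -> c = d.
Proof. by move=> -> /(congr1 (fun t => t + k *: b)); rewrite !subrK. Qed.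
Arguments eq_lincomb {K V} k {a b c d}.

Lemma bilin_pair_eq (K : fieldType) (U1 U2 W : lmodType K) (f g : U1 * U2 -> U1 * U2 -> W) :
  bilin f -> bilin g ->
  (forall x y, f (x, 0) (y, 0) = g (x, 0) (y, 0)) ->
  (forall x y, f (x, 0) (0, y) = g (x, 0) (0, y)) ->
  (forall x y, f (0, x) (y, 0) = g (0, x) (y, 0)) ->
  (forall x y, f (0, x) (0, y) = g (0, x) (0, y)) ->
  f = g.
Proof.
move=> bil_f bil_g f_gll f_glr f_grl f_grr.
have pairE (u : U1 * U2) : u = (u.1, 0) + (0, u.2).
  by case: u => a b; apply: injective_projections; rewrite /= ?addr0 ?add0r.
apply: functional_extensionality => u; apply: functional_extensionality => v.
by rewrite (pairE u) (pairE v) !(bilinDl bil_f, bilinDr bil_f, bilinDl bil_g, bilinDr bil_g)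
  f_gll f_glr f_grl f_grr.
Qed.

Ltac bilin_expand :=
  repeat match goal with
  | bil : bilin _ |- _ => progress rewrite ?(bilinDl bil) ?(bilinDr bil) ?(bilinNl bil)
      ?(bilinNr bil) ?(bilin0l bil) ?(bilin0r bil) ?(bilinZl bil) ?(bilinZr bil)
  end.

Section Pairing.
Variables (K : fieldType) (n : nat).
Local Notation V := 'rV[K]_n.
Implicit Types x y z w xi v : V.

Lemma pairingDl x y z : pairing (x + y) z = pairing x z + pairing y z.
Proof. by rewrite /pairing -big_split; apply: eq_bigr => i _; rewrite mxE mulrDl. Qed.

Lemma pairingZl a x z : pairing (a *: x) z = a * pairing x z.
Proof. by rewrite /pairing mulr_sumr; apply: eq_bigr => i _; rewrite mxE mulrA. Qed.

Lemma pairingC x y : pairing x y = pairing y x.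
Proof. by apply: eq_bigr => i _; rewrite mulrC. Qed.

Lemma pairingDr x y z : pairing x (y + z) = pairing x y + pairing x z.
Proof. by rewrite !(pairingC x) pairingDl. Qed.

Lemma pairingZr a x z : pairing x (a *: z) = a * pairing x z.
Proof. by rewrite !(pairingC x) pairingZl. Qed.

Lemma pairingNl x z : pairing (- x) z = - pairing x z.
Proof. by rewrite -scaleN1r pairingZl mulN1r. Qed.

Lemma pairingNr x z : pairing x (- z) = - pairing x z.
Proof. by rewrite !(pairingC x) pairingNl. Qed.

Lemma pairing0l z : pairing 0 z = 0.
Proof. by rewrite -(scale0r 0) pairingZl mul0r. Qed.

Lemma pairing0r x : pairing x 0 = 0.
Proof. by rewrite pairingC pairing0l. Qed.

Lemma pairing_sumr x (I : Type) (r : seq I) (P : pred I) (F : I -> V) :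
  pairing x (\sum_(i <- r | P i) F i) = \sum_(i <- r | P i) pairing x (F i).
Proof. by elim/big_rec2: _ => [|i a b _ <-]; rewrite ?pairing0r ?pairingDr. Qed.

Lemma pairing_deltal j z : pairing (delta_mx 0 j) z = z 0 j.
Proof.
rewrite /pairing (bigD1 j) //= mxE !eqxx mul1r big1 ?addr0 // => i /negbTE ij.
by rewrite mxE ij andbF mul0r.
Qed.

Lemma pairing_inj x y : (forall w, pairing x w = pairing y w) -> x = y.
Proof. by move=> eq_xy; apply/rowP => j; rewrite -!pairing_deltal !(pairingC (delta_mx 0 j)). Qed.

Lemma dualopE (th : V -> V -> V) : bilin th ->
  forall x xi v, pairing (dualop th x xi) v = - pairing xi (th x v).
Proof.
move=> bil x xi v; rewrite [in RHS](row_sum_delta v).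
rewrite (linear_fun_sum (bil.2 x)) pairing_sumr -sumrN; apply: eq_bigr => j _.
by rewrite bilinZr // pairingZr mxE mulNr mulrC.
Qed.

Lemma dualop_bilin (th : V -> V -> V) : bilin th -> bilin (dualop th).
Proof.
move=> bil; split=> [xi|x] a y z; apply/rowP => j; rewrite !mxE.
  by rewrite bilinDl // bilinZl // pairingDr pairingZr opprD mulrN.
by rewrite pairingDl pairingZl opprD mulrN.
Qed.

Lemma omega_d_inl (x : V) u : omega_d u (x, 0) = pairing u.2 x.
Proof. by rewrite /omega_d pairing0r add0r. Qed.

Lemma omega_d_inr (x : V) u : omega_d u (0, x) = pairing u.1 x.
Proof. by rewrite /omega_d pairing0r addr0. Qed.

Definition opp_dualop (th : V -> V -> V) x xi := - dualop th x xi.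

Lemma opp_dualopE (th : V -> V -> V) : bilin th ->
  forall x xi v, pairing (opp_dualop th x xi) v = pairing xi (th x v).
Proof. by move=> bil x xi v; rewrite /opp_dualop pairingNl dualopE ?opprK. Qed.

Lemma opp_dualop_bilin (th : V -> V -> V) : bilin th -> bilin (opp_dualop th).
Proof. by move=> bil; apply: bilin_opp; apply: dualop_bilin. Qed.

End Pairing.

Section MalcevAlgebra.
Variables (K : fieldType) (n : nat) (br : 'rV[K]_n -> 'rV[K]_n -> 'rV[K]_n).
Hypothesis mal : malcev br.
Let bil : bilin br := mal.1.
Let brN : forall x y, br x y = - br y x := mal.2.1.
Let malcevJ := mal.2.2.
Local Notation J := (jacobiator br).

Lemma malcev_linear x t y z : J x y (br t z) + J t y (br x z) = br (J x y z) t + br (J t y z) x.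
Proof.
apply: (eq_lincomb 1 (malcevJ (x + t) y z)); apply: (eq_lincomb (-1) (malcevJ x y z)).
apply: (eq_lincomb (-1) (malcevJ t y z)).
rewrite /jacobiator; bilin_expand.
by apply/rowP => j; rewrite !mxE; ring.
Qed.

Hypothesis two_neq0 : 2%:R != 0 :> K.

Lemma ad_bracket_bracket x y z w : br (br (br x y) z) w =
  br x (br y (br z w)) - br z (br x (br y w)) - br (br y z) (br x w) - br y (br (br x z) w).
Proof.
apply: (scalerI two_neq0).
apply: (eq_lincomb (-1) (malcev_linear x w y z)); apply: (eq_lincomb 1 (malcev_linear x y z w)).
apply: (eq_lincomb 1 (malcev_linear x z w y)).
rewrite /jacobiator; bilin_expand.
(* Orient every bracket in the same way, so that [ring] identifies equal terms. *)
rewrite ?(brN x w) ?(brN y w) ?(brN y x) ?(brN z w) ?(brN z x) ?(brN z y); bilin_expand.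
rewrite ?(brN (br x y) (br w z)) ?(brN (br x z) (br w y)) ?(brN (br y z) (br w x))
  ?(brN w (br x y)) ?(brN w (br y z)) ?(brN x (br w y)) ?(brN y (br w z)) ?(brN y (br x z))
  ?(brN z (br w x)) ?(brN z (br w y)); bilin_expand.
rewrite ?(brN x (br (br w z) y)) ?(brN y (br (br x z) w)) ?(brN z (br (br w y) x)); bilin_expand.
by apply/rowP => j; rewrite !mxE; ring.
Qed.

End MalcevAlgebra.

Section Coadjoint.
Variables (K : fieldType) (n : nat) (br pr : 'rV[K]_n -> 'rV[K]_n -> 'rV[K]_n).
Hypotheses (mp : malcev_poisson br pr) (two_neq0 : 2%:R != 0 :> K).
Let bil_br : bilin br := mp.1.1.
Let brN : forall x y, br x y = - br y x := mp.1.2.1.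
Let bil_pr : bilin pr := mp.2.1.
Let prC : forall x y, pr x y = pr y x := mp.2.2.1.
Let prA : forall x y z, pr (pr x y) z = pr x (pr y z) := mp.2.2.2.1.
Let br_pr : forall x y z, br x (pr y z) = pr (br x y) z + pr y (br x z) := mp.2.2.2.2.

Lemma bracket_product_l x y w : br (pr x y) w = br x (pr y w) + br y (pr x w).
Proof.
rewrite brN !br_pr (brN y x) (brN x w) (brN y w); bilin_expand.
rewrite (prC y (br w x)) (prC x (br w y)).
by apply/rowP => j; rewrite !mxE; ring.
Qed.

Lemma coadjoint_malcev_rep : malcev_rep br (dualop br).
Proof.
split=> [|x y z v]; first exact: dualop_bilin.
apply: pairing_inj => w; rewrite !pairingDl !pairingNl !(dualopE bil_br).
by rewrite (ad_bracket_bracket mp.1 two_neq0) !pairingDr !pairingNr; ring.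
Qed.

Lemma coadjoint_mp_rep : mp_rep br pr (dualop br) (opp_dualop pr).
Proof.
split; first exact: coadjoint_malcev_rep.
split; first split=> [|x y v]; first exact: opp_dualop_bilin.
  by apply: pairing_inj => w; rewrite !(opp_dualopE bil_pr) (prC x y) prA.
split=> x y v; apply: pairing_inj => w.
  rewrite pairingDl !((opp_dualopE bil_pr), dualopE bil_br) bracket_product_l.
  by rewrite pairingDr opprD.
rewrite (opp_dualopE bil_pr) pairingDl pairingNl !((opp_dualopE bil_pr), dualopE bil_br).
by rewrite br_pr pairingDr; ring.
Qed.

End Coadjoint.

Section MatchedPairConditions.
Variables (K : fieldType) (A B : lmodType K).

Definition mp_product (prA : A -> A -> A) (prB : B -> B -> B) (mA : A -> B -> B) (mB : B -> A -> A)
  (u v : A * B) : A * B :=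
  (prA u.1 v.1 + mB u.2 v.1 + mB v.2 u.1, prB u.2 v.2 + mA u.1 v.2 + mA v.1 u.2).

(* With (A, B) = (A1, A2) or (A2, A1), these are the conditions (i) and (iv)
   of [matched_pair]. *)
Definition matched_assoc (prB : B -> B -> B) (mA : A -> B -> B) (mB : B -> A -> A) :=
  forall x y z, mA x (prB y z) = prB (mA x y) z + mA (mB y x) z.

Definition matched_derivation (prA : A -> A -> A) (rB mB : B -> A -> A) (rA : A -> B -> B) :=
  forall x y b, rB b (prA x y) = prA (rB b x) y + prA x (rB b y) - mB (rA x b) y - mB (rA y b) x.

Definition matched_leibniz (brA prA : A -> A -> A) (rB mB : B -> A -> A) (rA mA : A -> B -> B) :=
  forall x y b, brA x (mB b y) - rB (mA y b) x = mB (rA x b) y - prA (rB b x) y + mB b (brA x y).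

End MatchedPairConditions.

Section DoubleComponents.
Variables (K : fieldType) (n1 n2 : nat).
Local Notation A1 := 'rV[K]_n1.
Local Notation A2 := 'rV[K]_n2.
Variables (br1 pr1 : A1 -> A1 -> A1) (br2 pr2 : A2 -> A2 -> A2).
Variables (r1 m1 : A1 -> A2 -> A2) (r2 m2 : A2 -> A1 -> A1).
Local Notation P := (mp_product pr1 pr2 m1 m2).
Local Notation B := (mp_bracket br1 br2 r1 r2).

Section Bilinear.
Hypotheses (bil_br1 : bilin br1) (bil_pr1 : bilin pr1) (bil_br2 : bilin br2) (bil_pr2 : bilin pr2).
Hypotheses (bil_r1 : bilin r1) (bil_m1 : bilin m1) (bil_r2 : bilin r2) (bil_m2 : bilin m2).

Lemma mp_product_bilin : bilin P.
Proof.
by split=> [w|u] a [x1 x2] [y1 y2]; rewrite /mp_product /=; bilin_expand;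
  congr pair; apply/rowP => j; rewrite !mxE; ring.
Qed.

Lemma mp_bracket_bilin : bilin B.
Proof.
by split=> [w|u] a [x1 x2] [y1 y2]; rewrite /mp_bracket /=; bilin_expand;
  congr pair; apply/rowP => j; rewrite !mxE; ring.
Qed.

Lemma mp_product_mixed x y : P (x, 0) (0, y) = (m2 y x, m1 x y).
Proof. by rewrite /mp_product /=; bilin_expand; rewrite !(add0r, addr0). Qed.

Lemma mp_bracket_mixed x y : B (x, 0) (0, y) = (- r2 y x, r1 x y).
Proof. by rewrite /mp_bracket /=; bilin_expand; rewrite !(add0r, addr0, subr0, sub0r). Qed.

Lemma mp_product_inl x y : P (x, 0) (y, 0) = (pr1 x y, 0).
Proof. by rewrite /mp_product /=; bilin_expand; rewrite !(add0r, addr0). Qed.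

Lemma mp_product_inr x y : P (0, x) (0, y) = (0, pr2 x y).
Proof. by rewrite /mp_product /=; bilin_expand; rewrite !(add0r, addr0). Qed.

Lemma mp_bracket_inl x y : B (x, 0) (y, 0) = (br1 x y, 0).
Proof. by rewrite /mp_bracket /=; bilin_expand; rewrite !(add0r, addr0, subr0). Qed.

Lemma mp_bracket_inr x y : B (0, x) (0, y) = (0, br2 x y).
Proof. by rewrite /mp_bracket /=; bilin_expand; rewrite !(add0r, addr0, subr0). Qed.

End Bilinear.

Section MalcevPoissonData.
Hypotheses (mp1 : malcev_poisson br1 pr1) (mp2 : malcev_poisson br2 pr2).
Hypotheses (rep1 : mp_rep br1 pr1 r1 m1) (rep2 : mp_rep br2 pr2 r2 m2).
Let bil_br1 : bilin br1 := mp1.1.1.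
Let bil_pr1 : bilin pr1 := mp1.2.1.
Let bil_br2 : bilin br2 := mp2.1.1.
Let bil_pr2 : bilin pr2 := mp2.2.1.
Let bil_r1 : bilin r1 := rep1.1.1.
Let bil_m1 : bilin m1 := rep1.2.1.1.
Let bil_r2 : bilin r2 := rep2.1.1.
Let bil_m2 : bilin m2 := rep2.2.1.1.

Lemma mp_productC u v : P u v = P v u.
Proof.
by rewrite /mp_product (mp1.2.2.1 u.1) (mp2.2.2.1 u.2) -!addrA (addrC (m2 _ _)) (addrC (m1 _ _)).
Qed.

Lemma mp_product_assoc_fst : matched_assoc pr1 m2 m1 ->
  forall u v w, (P (P u v) w).1 = (P u (P v w)).1.
Proof.
move=> assoc1 [x1 x2] [y1 y2] [z1 z2] /=.
have pr1C := mp1.2.2.1; have pr2C := mp2.2.2.1; have m2M := rep2.2.1.2.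
apply: (eq_lincomb 1 (mp1.2.2.2.1 x1 y1 z1)).
apply: (eq_lincomb 1 (m2M x2 y2 z1)); apply: (eq_lincomb 1 (m2M x2 z2 y1)).
apply: (eq_lincomb (-1) (m2M z2 x2 y1)); apply: (eq_lincomb (-1) (m2M z2 y2 x1)).
apply: (eq_lincomb (-1) (assoc1 x2 y1 z1)); apply: (eq_lincomb (-1) (assoc1 y2 x1 z1)).
apply: (eq_lincomb 1 (assoc1 y2 z1 x1)); apply: (eq_lincomb 1 (assoc1 z2 y1 x1)).
bilin_expand.
rewrite ?(pr1C y1 x1) ?(pr1C z1 x1) ?(pr2C z2 x2) ?(pr2C z2 y2).
rewrite ?(pr1C x1 (m2 y2 z1)) ?(pr1C x1 (m2 z2 y1)) ?(pr1C x1 (pr1 y1 z1)).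
by apply/rowP => j; rewrite !mxE; ring.
Qed.

Lemma mp_bracket_leibniz_fst : matched_derivation pr1 r2 m2 r1 ->
  matched_leibniz br1 pr1 r2 m2 r1 m1 ->
  forall u v w, (B u (P v w)).1 = (P (B u v) w + P v (B u w)).1.
Proof.
move=> der1 leib1 [x1 x2] [y1 y2] [z1 z2] /=.
have br1N := mp1.1.2.1; have pr1C := mp1.2.2.1; have m2_br2 := rep2.2.2.2.
apply: (eq_lincomb 1 (mp1.2.2.2.2 x1 y1 z1)); apply: (eq_lincomb (-1) (rep2.2.2.1 y2 z2 x1)).
apply: (eq_lincomb (-1) (m2_br2 x2 y2 z1)); apply: (eq_lincomb (-1) (m2_br2 x2 z2 y1)).
apply: (eq_lincomb 1 (der1 y1 z1 x2)).
apply: (eq_lincomb 1 (leib1 x1 y1 z2)); apply: (eq_lincomb 1 (leib1 x1 z1 y2)).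
bilin_expand.
rewrite ?(br1N x1 (m2 y2 z1)) ?(br1N x1 (m2 z2 y1)) ?(br1N x1 (pr1 y1 z1)).
rewrite ?(pr1C y1 (br1 x1 z1)) ?(pr1C y1 (r2 x2 z1)) ?(pr1C y1 (r2 z2 x1)).
bilin_expand.
by apply/rowP => j; rewrite !mxE; ring.
Qed.

Section Forward.
Hypothesis P_assoc : forall u v w, P (P u v) w = P u (P v w).
Hypothesis B_P_leibniz : forall u v w, B u (P v w) = P (B u v) w + P v (B u w).

Lemma mp_product_assoc_matched1 : matched_assoc pr1 m2 m1.
Proof.
move=> x y z; move: (P_assoc (0, x) (y, 0) (z, 0)) => /(congr1 fst).
by rewrite /mp_product /=; bilin_expand; rewrite !(add0r, addr0) => <-.
Qed.

Lemma mp_product_assoc_matched2 : matched_assoc pr2 m1 m2.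
Proof.
move=> x y z; move: (P_assoc (x, 0) (0, y) (0, z)) => /(congr1 snd).
by rewrite /mp_product /=; bilin_expand; rewrite !(add0r, addr0) => <-.
Qed.

Lemma mp_leibniz_matched_derivation1 : matched_derivation pr1 r2 m2 r1.
Proof.
move=> x y b; apply: (eq_lincomb 1 (congr1 fst (B_P_leibniz (0, b) (x, 0) (y, 0)))).
rewrite /mp_product /mp_bracket /=; bilin_expand; rewrite (mp1.2.2.1 x (r2 b y)).
by apply/rowP => j; rewrite !mxE; ring.
Qed.

Lemma mp_leibniz_matched_derivation2 : matched_derivation pr2 r1 m1 r2.
Proof.
move=> x y b; apply: (eq_lincomb 1 (congr1 snd (B_P_leibniz (b, 0) (0, x) (0, y)))).
rewrite /mp_product /mp_bracket /=; bilin_expand; rewrite (mp2.2.2.1 x (r1 b y)).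
by apply/rowP => j; rewrite !mxE; ring.
Qed.

Lemma mp_leibniz_matched_leibniz1 : matched_leibniz br1 pr1 r2 m2 r1 m1.
Proof.
move=> x y b; apply: (eq_lincomb 1 (congr1 fst (B_P_leibniz (x, 0) (y, 0) (0, b)))).
rewrite /mp_product /mp_bracket /=; bilin_expand.
rewrite (mp1.1.2.1 x (m2 b y)) (mp1.2.2.1 y (r2 b x)); bilin_expand.
by apply/rowP => j; rewrite !mxE; ring.
Qed.

Lemma mp_leibniz_matched_leibniz2 : matched_leibniz br2 pr2 r1 m1 r2 m2.
Proof.
move=> x y b; apply: (eq_lincomb 1 (congr1 snd (B_P_leibniz (0, x) (0, y) (b, 0)))).
rewrite /mp_product /mp_bracket /=; bilin_expand.
rewrite (mp2.1.2.1 x (m1 b y)) (mp2.2.2.1 y (r1 b x)); bilin_expand.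
by apply/rowP => j; rewrite !mxE; ring.
Qed.

End Forward.
End MalcevPoissonData.
End DoubleComponents.

Section Double.
Variables (K : fieldType) (n1 n2 : nat).
Local Notation A1 := 'rV[K]_n1.
Local Notation A2 := 'rV[K]_n2.
Variables (br1 pr1 : A1 -> A1 -> A1) (br2 pr2 : A2 -> A2 -> A2).
Variables (r1 m1 : A1 -> A2 -> A2) (r2 m2 : A2 -> A1 -> A1).
Local Notation P := (mp_product pr1 pr2 m1 m2).
Local Notation B := (mp_bracket br1 br2 r1 r2).
Hypotheses (mp1 : malcev_poisson br1 pr1) (mp2 : malcev_poisson br2 pr2).
Hypotheses (rep1 : mp_rep br1 pr1 r1 m1) (rep2 : mp_rep br2 pr2 r2 m2).

Lemma mp_product_assoc : matched_assoc pr2 m1 m2 -> matched_assoc pr1 m2 m1 ->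
  forall u v w, P (P u v) w = P u (P v w).
Proof.
(* The second component of the double is the first one of the double of the
   swapped data, by computation. *)
move=> assoc2 assoc1 u v w; apply: injective_projections.
  exact: (mp_product_assoc_fst mp1 mp2 rep2 assoc1).
exact: (mp_product_assoc_fst mp2 mp1 rep1 assoc2 (u.2, u.1) (v.2, v.1) (w.2, w.1)).
Qed.

Lemma mp_bracket_leibniz :
  matched_derivation pr1 r2 m2 r1 -> matched_derivation pr2 r1 m1 r2 ->
  matched_leibniz br1 pr1 r2 m2 r1 m1 -> matched_leibniz br2 pr2 r1 m1 r2 m2 ->
  forall u v w, B u (P v w) = P (B u v) w + P v (B u w).
Proof.
move=> der1 der2 leib1 leib2 u v w; apply: injective_projections.
  exact: (mp_bracket_leibniz_fst mp1 rep2 der1 leib1).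
exact: (mp_bracket_leibniz_fst mp2 rep1 der2 leib2 (u.2, u.1) (v.2, v.1) (w.2, w.1)).
Qed.

Theorem matched_pair_double :
  malcev_poisson B P <-> matched_pair br1 pr1 br2 pr2 r1 m1 r2 m2.
Proof.
split=> [mpD | [[_ _ assoc2 assoc1] [[_ _ malB] [_ [der1 der2 leib1 leib2]]]]].
  have [PA BPL] := (mpD.2.2.2.1, mpD.2.2.2.2).
  split; first by split; [exact: rep1.2.1 | exact: rep2.2.1 |
    exact: (mp_product_assoc_matched2 mp1 mp2 rep1 rep2 PA) |
    exact: (mp_product_assoc_matched1 mp1 mp2 rep1 rep2 PA)].
  split; first by split; [exact: rep1.1 | exact: rep2.1 | exact: mpD.1].
  split=> //; split.
  - exact: (mp_leibniz_matched_derivation1 mp1 mp2 rep1 rep2 BPL).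
  - exact: (mp_leibniz_matched_derivation2 mp1 mp2 rep1 rep2 BPL).
  - exact: (mp_leibniz_matched_leibniz1 mp1 mp2 rep1 rep2 BPL).
  - exact: (mp_leibniz_matched_leibniz2 mp1 mp2 rep1 rep2 BPL).
split=> //; split; first exact: (mp_product_bilin mp1.2.1 mp2.2.1 rep1.2.1.1 rep2.2.1.1).
split; first exact: (mp_productC m1 m2 mp1 mp2).
split; [exact: mp_product_assoc | exact: mp_bracket_leibniz].
Qed.

End Double.

Section ManinDouble.
Variables (K : fieldType) (n : nat).
Local Notation V := 'rV[K]_n.
Variables (br1 pr1 br2 pr2 : V -> V -> V).
Hypotheses (mp1 : malcev_poisson br1 pr1) (mp2 : malcev_poisson br2 pr2).
Let bil_br1 : bilin br1 := mp1.1.1.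
Let bil_pr1 : bilin pr1 := mp1.2.1.
Let bil_br2 : bilin br2 := mp2.1.1.
Let bil_pr2 : bilin pr2 := mp2.2.1.
Let bil_ad1 : bilin (dualop br1) := dualop_bilin bil_br1.
Let bil_ad2 : bilin (dualop br2) := dualop_bilin bil_br2.
Let bil_L1 : bilin (opp_dualop pr1) := opp_dualop_bilin bil_pr1.
Let bil_L2 : bilin (opp_dualop pr2) := opp_dualop_bilin bil_pr2.
Local Notation P := (mp_product pr1 pr2 (opp_dualop pr1) (opp_dualop pr2)).
Local Notation B := (mp_bracket br1 br2 (dualop br1) (dualop br2)).

Lemma double_product_invariant u v w : omega_d (P u v) w = omega_d u (P v w).
Proof.
case: u v w => [x1 x2] [y1 y2] [z1 z2].
rewrite /omega_d /mp_product /= (pairingC x1) (pairingC x2) !pairingDl.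
rewrite !(opp_dualopE bil_pr1, opp_dualopE bil_pr2).
rewrite (mp1.2.2.1 y1 x1) (mp1.2.2.1 z1 x1) (mp2.2.2.1 y2 x2) (mp2.2.2.1 z2 x2).
by rewrite ![pairing _ (pr1 _ _)]pairingC ![pairing _ (pr2 _ _)]pairingC; ring.
Qed.

Lemma double_bracket_invariant u v w : omega_d (B u v) w = omega_d u (B v w).
Proof.
case: u v w => [x1 x2] [y1 y2] [z1 z2].
rewrite /omega_d /mp_bracket /= (pairingC x1) (pairingC x2) !pairingDl !pairingNl.
rewrite !(dualopE bil_br1, dualopE bil_br2).
rewrite (mp1.1.2.1 y1 x1) (mp1.1.2.1 z1 x1) (mp2.1.2.1 y2 x2) (mp2.1.2.1 z2 x2); bilin_expand.
by rewrite !pairingNr ![pairing _ (br1 _ _)]pairingC ![pairing _ (br2 _ _)]pairingC; ring.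
Qed.

Section ManinTriple.
Variables (br pr : V * V -> V * V -> V * V).
Hypothesis mp : malcev_poisson br pr.
Hypotheses (br_inl : forall x y, br (x, 0) (y, 0) = (br1 x y, 0))
  (pr_inl : forall x y, pr (x, 0) (y, 0) = (pr1 x y, 0))
  (br_inr : forall x y, br (0, x) (0, y) = (0, br2 x y))
  (pr_inr : forall x y, pr (0, x) (0, y) = (0, pr2 x y)).
Hypotheses (pr_invariant : forall u v w, omega_d (pr u v) w = omega_d u (pr v w))
  (br_invariant : forall u v w, omega_d (br u v) w = omega_d u (br v w)).

Lemma manin_bracket_mixed x y : br (x, 0) (0, y) = (- dualop br2 y x, dualop br1 x y).
Proof.
apply: injective_projections; apply: pairing_inj => w /=.
  have := br_invariant (x, 0) (0, y) (0, w).
  by rewrite br_inr !omega_d_inr /= pairingNl (dualopE bil_br2) opprK.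
have := br_invariant (0, y) (x, 0) (w, 0).
rewrite br_inl !omega_d_inl /= (dualopE bil_br1) (mp.1.2.1 (0, y)) /= pairingNl.
by move=> <-; rewrite opprK.
Qed.

Lemma manin_product_mixed x y : pr (x, 0) (0, y) = (opp_dualop pr2 y x, opp_dualop pr1 x y).
Proof.
apply: injective_projections; apply: pairing_inj => w /=.
  have := pr_invariant (x, 0) (0, y) (0, w).
  by rewrite pr_inr !omega_d_inr /= (opp_dualopE bil_pr2).
have := pr_invariant (0, y) (x, 0) (w, 0).
by rewrite pr_inl !omega_d_inl /= (opp_dualopE bil_pr1) (mp.2.2.1 (0, y)).
Qed.

Lemma manin_bracketE : br = B.
Proof.
apply: bilin_pair_eq; first exact: mp.1.1.
- exact: mp_bracket_bilin.
- by move=> x y; rewrite br_inl mp_bracket_inl.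
- by move=> x y; rewrite manin_bracket_mixed mp_bracket_mixed.
- move=> x y; rewrite mp.1.2.1 manin_bracket_mixed /mp_bracket /=; bilin_expand.
  by apply: injective_projections; rewrite /= ?(add0r, addr0, subr0, sub0r, opprK).
- by move=> x y; rewrite br_inr mp_bracket_inr.
Qed.

Lemma manin_productE : pr = P.
Proof.
apply: bilin_pair_eq; first exact: mp.2.1.
- exact: mp_product_bilin.
- by move=> x y; rewrite pr_inl mp_product_inl.
- by move=> x y; rewrite manin_product_mixed mp_product_mixed.
- move=> x y; rewrite mp.2.2.1 manin_product_mixed /mp_product /=; bilin_expand.
  by rewrite !(add0r, addr0).
- by move=> x y; rewrite pr_inr mp_product_inr.
Qed.

End ManinTriple.

Lemma std_manin_triple_double : std_manin_triple br1 pr1 br2 pr2 <-> malcev_poisson B P.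
Proof.
split=> [[br [pr [mp [br_inl pr_inl] [br_inr pr_inr] [pr_inv br_inv]]]] | mpD].
  by rewrite -(manin_bracketE mp) // -(manin_productE mp).
exists B, P; split=> //.
- by split=> x y; rewrite (mp_bracket_inl, mp_product_inl).
- by split=> x y; rewrite (mp_bracket_inr, mp_product_inr).
- by split; [exact: double_product_invariant | exact: double_bracket_invariant].
Qed.

End ManinDouble.

Theorem mainTheorem2 (K : closedFieldType) (hK : [pchar K] =i pred0) (n : nat)
  (br1 pr1 br2 pr2 : 'rV[K]_n -> 'rV[K]_n -> 'rV[K]_n) :
  malcev_poisson br1 pr1 -> malcev_poisson br2 pr2 ->
  (std_manin_triple br1 pr1 br2 pr2 <->
   matched_pair br1 pr1 br2 pr2
     (dualop br1) (fun x xi => - dualop pr1 x xi)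
     (dualop br2) (fun xi x => - dualop pr2 xi x)).
Proof.
move=> mp1 mp2; have two_neq0 : 2%:R != 0 :> K by move/pcharf0P: hK => ->.
apply: iff_trans (std_manin_triple_double mp1 mp2) _.
exact: matched_pair_double mp1 mp2 (coadjoint_mp_rep mp1 two_neq0) (coadjoint_mp_rep mp2 two_neq0).
Qed.
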